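(* Let $R$ be a commutative ring and $x\in R$ a regular element which is not a unit. Then the weak global dimension of $R\bowtie xR$ is infinite: $\mathrm{wdim}(R\bowtie xR)=\infty$.
   Context: All rings are commutative with identity. $R\bowtie xR:=\{(r,r+xs)\mid r,s\in R\}$, a subring of $R\times R$ with componentwise operations. A regular element is a non-zerodivisor. $\mathrm{wdim}$ denotes the (classical) weak global dimension, i.e. the supremum of flat dimensions of all modules. *)

From HB Require Import structures.
From mathcomp Require Import all_boot all_order all_algebra.
From Stdlib Require Import ClassicalEpsilon.
Set Implicit Arguments. Unset Strict Implicit. Unset Printing Implicit Defensive.
Import Order.TTheory GRing.Theory.
Local Open Scope ring_scope.

Definition asbool (P : Prop) : bool :=
  if excluded_middle_informative P then true else false.

Lemma asboolP (P : Prop) : reflect P (asbool P).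
Proof. by rewrite /asbool; case: excluded_middle_informative => h; constructor. Qed.

Section Amalgamation.
Variables (R : comPzRingType) (x : R).

Definition amalg_pred : pred (R * R) :=
  fun p => asbool (exists r s : R, p = (r, r + x * s)).

Lemma amalg_subring_closed : subring_closed amalg_pred.
Proof.
split.
- apply/asboolP; exists 1, 0; by rewrite mulr0 addr0.
- move=> p q /asboolP[r [s ->]] /asboolP[r' [s' ->]]; apply/asboolP.
  exists (r - r'), (s - s'); congr (_, _); rewrite mulrBr.
  by rewrite /= opprD addrACA.
- move=> p q /asboolP[r [s ->]] /asboolP[r' [s' ->]]; apply/asboolP.
  exists (r * r'), (r * s' + s * r' + x * s * s'); congr (_, _).
  rewrite /= mulrDl !mulrDr -!addrA; congr (_ + _).
  rewrite !mulrA [r * x]mulrC; congr (_ + _); congr (_ + _).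
  by congr (_ * s'); rewrite mulrAC.
Qed.


HB.instance Definition _ := GRing.isSubringClosed.Build (R * R)%type amalg_pred
  amalg_subring_closed.

Record amalg := Amalg { amalg_val : R * R; amalg_valP : amalg_pred amalg_val }.

HB.instance Definition _ := [isSub for amalg_val].
HB.instance Definition _ := [Choice of amalg by <:].
HB.instance Definition _ := GRing.SubChoice_isSubComPzRing.Build (R * R)%type amalg_pred amalg amalg_subring_closed.

End Amalgamation.

Notation "R ⋈ x" := (amalg (R := R) x) (at level 40).

Section Homological.
Variable A : comPzRingType.

Definition bilinear_map (M N T : lmodType A) (b : M -> N -> T) : Prop :=
  (forall n : N, linear (b ^~ n)) /\ (forall m : M, linear (b m)).

Definition is_tensor (M N T : lmodType A) (b : M -> N -> T) : Prop :=
  bilinear_map b /\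
  forall (P : lmodType A) (g : M -> N -> P), bilinear_map g ->
    exists h : {linear T -> P},
      (forall m n, h (b m n) = g m n) /\
      (forall h' : {linear T -> P}, (forall m n, h' (b m n) = g m n) ->
          forall t, h' t = h t).

Definition flat (M : lmodType A) : Prop :=
  forall (N1 N2 : lmodType A) (f : {linear N1 -> N2}), injective f ->
  forall (T1 T2 : lmodType A) (b1 : M -> N1 -> T1) (b2 : M -> N2 -> T2),
    is_tensor b1 -> is_tensor b2 ->
  forall h : {linear T1 -> T2}, (forall m n, h (b1 m n) = b2 m (f n)) ->
    injective h.

(* fd M <= n : M has a flat resolution of length n,
   0 -> F_n -> ... -> F_1 -> F_0 -> M -> 0  exact with F_i flat
   (written as an exact complex with F_i = 0 for i > n). *)
Definition flat_dim_le (M : lmodType A) (n : nat) : Prop :=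
  exists (F : nat -> lmodType A) (d : forall i, {linear F i.+1 -> F i})
         (eps : {linear F 0%N -> M}),
    (forall i, flat (F i)) /\
    (forall i, (n < i)%N -> forall v : F i, v = 0) /\
    (forall m : M, exists y, eps y = m) /\
    (forall y : F 0%N, eps y = 0 <-> exists z, d 0%N z = y) /\
    (forall i (y : F i.+1), d i y = 0 <-> exists z, d i.+1 z = y).

Definition wdim_infinite : Prop :=
  forall n : nat, exists M : lmodType A, ~ flat_dim_le M n.

End Homological.

(* Put a := (0, x) and b := (x, 0) in A.  Then a b = 0 and, x being regular,
   the annihilator of a is b A and the annihilator of b is a A.  Call a
   subset P of an A-module balanced when every element of P killed by a is
   b times an element of P, and every element of P killed by b is a times an
   element of P.  The proof has three steps.
   1. Flat modules are balanced: tensoring the injection A/bA -> A,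
      t + bA |-> a t, with a flat module F yields the injection
      F/bF -> F, m + bF |-> a m.
   2. Dimension shifting: for a linear map p : F -> N with F flat, if the
      kernel of p is balanced then so is its image.  Walking down a finite
      flat resolution, every module of finite flat dimension is balanced.
   3. As x is not a unit, A/aA is not balanced: the class of 1 is killed by
      a but is not b times a class.
   Hence A/aA has no finite flat resolution. *)
From HB Require Import structures.
From mathcomp Require Import all_boot all_order all_algebra.
From Stdlib Require Import ClassicalEpsilon FunctionalExtensionality PropExtensionality.

Set Implicit Arguments. Unset Strict Implicit. Unset Printing Implicit Defensive.
Import GRing.Theory.
Local Open Scope ring_scope.

(* Packages a function together with a proof of its linearity as a
   {linear _ -> _}; used for partial applications of bilinear maps. *)
Definition linear_of (A : comPzRingType) (U V : lmodType A) (f : U -> V)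
  (f_linear : linear f) : U -> V := f.

HB.instance Definition _ (A : comPzRingType) (U V : lmodType A) (f : U -> V)
  (f_linear : linear f) :=
  GRing.isLinear.Build A U V *:%R (linear_of f_linear) f_linear.

Section Bilinear.
Variables (A : comPzRingType) (M N T : lmodType A) (g : M -> N -> T).
Hypothesis g_bilinear : bilinear_map g.

Lemma bilinZl k u n : g (k *: u) n = k *: g u n.
Proof. exact: (linearZ_LR (linear_of (g_bilinear.1 n))). Qed.

Lemma bilin0r m : g m 0 = 0.
Proof. exact: (linear0 (linear_of (g_bilinear.2 m))). Qed.

Lemma bilinZr m k v : g m (k *: v) = k *: g m v.
Proof. exact: (linearZ_LR (linear_of (g_bilinear.2 m))). Qed.

End Bilinear.

Section QuotientModule.
Variables (A : comPzRingType) (N : lmodType A) (c : A).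

Definition cong_mod (u v : N) : Prop := exists w, u - v = c *: w.

Lemma cong_refl u : cong_mod u u.
Proof. by exists 0; rewrite subrr scaler0. Qed.

Lemma cong_sym u v : cong_mod u v -> cong_mod v u.
Proof. by case=> w h; exists (- w); rewrite scalerN -h opprB. Qed.

Lemma cong_trans u v t : cong_mod u v -> cong_mod v t -> cong_mod u t.
Proof.
by case=> w h [w' h']; exists (w + w'); rewrite scalerDr -h -h' addrA subrK.
Qed.

Definition canon (u : N) : N := epsilon (inhabits 0) (cong_mod u).

Lemma cong_canon u : cong_mod u (canon u).
Proof. exact: (epsilon_spec (inhabits 0) (cong_mod u) (ex_intro _ u (cong_refl u))). Qed.

Lemma canon_eq u v : cong_mod u v -> canon u = canon v.
Proof.
move=> uv; rewrite /canon; congr epsilon.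
apply: functional_extensionality => t; apply: propositional_extensionality.
by split; [apply: cong_trans (cong_sym uv) | apply: cong_trans uv].
Qed.

Lemma canonK u : canon (canon u) = canon u.
Proof. exact/canon_eq/cong_sym/cong_canon. Qed.

(* The quotient N / cN, realised as the set of representatives. *)
Record quotmod := QuotMod { qval : N; qvalP : canon qval == qval }.

HB.instance Definition _ := [isSub for qval].
HB.instance Definition _ := [Choice of quotmod by <:].

Definition qpi (u : N) : quotmod := QuotMod (introT eqP (canonK u)).

Lemma qvalK : cancel qval qpi.
Proof. by case=> u uP; apply: val_inj => /=; apply/eqP. Qed.

Lemma qpi_ind (P : quotmod -> Prop) : (forall u, P (qpi u)) -> forall q, P q.
Proof. by move=> Pqpi q; rewrite -[q]qvalK. Qed.

Lemma qpi_eqE u v : qpi u = qpi v <-> cong_mod u v.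
Proof.
split=> [/(congr1 qval) /= e | uv]; last exact/val_inj/canon_eq.
by apply: cong_trans (cong_canon u) _; rewrite e; apply/cong_sym/cong_canon.
Qed.

Lemma qpi_addc u w : qpi (u + c *: w) = qpi u.
Proof. by apply/qpi_eqE; exists w; rewrite addrC addKr. Qed.

Lemma qval_qpi u : exists w, qval (qpi u) = u + c *: w.
Proof. by case: (cong_canon u) => w h; exists (- w); rewrite scalerN -h opprB addrC subrK. Qed.

Definition qadd p q := qpi (qval p + qval q).
Definition qopp p := qpi (- qval p).
Definition qscale k p := qpi (k *: qval p).

Lemma qaddE u v : qadd (qpi u) (qpi v) = qpi (u + v).
Proof.
rewrite /qadd; have [w1 ->] := qval_qpi u; have [w2 ->] := qval_qpi v.
by rewrite addrACA -scalerDr qpi_addc.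
Qed.

Lemma qoppE u : qopp (qpi u) = qpi (- u).
Proof. by rewrite /qopp; have [w ->] := qval_qpi u; rewrite opprD -scalerN qpi_addc. Qed.

Lemma qscaleE k u : qscale k (qpi u) = qpi (k *: u).
Proof.
rewrite /qscale; have [w ->] := qval_qpi u.
by rewrite scalerDr scalerA mulrC -scalerA qpi_addc.
Qed.

Lemma qaddA : associative qadd.
Proof.
move=> p q r; elim/qpi_ind: p => u; elim/qpi_ind: q => v; elim/qpi_ind: r => t.
by rewrite !qaddE addrA.
Qed.

Lemma qaddC : commutative qadd.
Proof. by move=> p q; elim/qpi_ind: p => u; elim/qpi_ind: q => v; rewrite !qaddE addrC. Qed.

Lemma qadd0 : left_id (qpi 0) qadd.
Proof. by move=> p; elim/qpi_ind: p => u; rewrite qaddE add0r. Qed.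

Lemma qaddN : left_inverse (qpi 0) qopp qadd.
Proof. by move=> p; elim/qpi_ind: p => u; rewrite qoppE qaddE addNr. Qed.

HB.instance Definition _ := GRing.isZmodule.Build quotmod qaddA qaddC qadd0 qaddN.

Lemma qpiD u v : qpi u + qpi v = qpi (u + v).
Proof. exact: qaddE. Qed.

Lemma qscaleA a b p : qscale a (qscale b p) = qscale (a * b) p.
Proof. by elim/qpi_ind: p => u; rewrite !qscaleE scalerA. Qed.

Lemma qscale1 : left_id 1 qscale.
Proof. by move=> p; elim/qpi_ind: p => u; rewrite qscaleE scale1r. Qed.

Lemma qscaleDr : right_distributive qscale +%R.
Proof.
move=> k p q; elim/qpi_ind: p => u; elim/qpi_ind: q => v.
by rewrite qpiD !qscaleE qpiD scalerDr.
Qed.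

Lemma qscaleDl p : {morph qscale^~ p : a b / a + b}.
Proof.
by move=> a b; elim/qpi_ind: p => u; rewrite !qscaleE qpiD scalerDl.
Qed.

HB.instance Definition _ :=
  GRing.Zmodule_isLmodule.Build A quotmod qscaleA qscale1 qscaleDr qscaleDl.

Lemma qpiZ k u : k *: qpi u = qpi (k *: u).
Proof. exact: qscaleE. Qed.

Lemma qpi_linear : linear qpi.
Proof. by move=> k u v; rewrite qpiZ qpiD. Qed.

HB.instance Definition _ := GRing.isLinear.Build A N quotmod *:%R qpi qpi_linear.

Lemma qpi_eq0 u : qpi u = 0 <-> exists w, u = c *: w.
Proof. by rewrite -(linear0 qpi) qpi_eqE /cong_mod subr0. Qed.

Section Lift.
Variables (P : lmodType A) (phi : {linear N -> P}).
Hypothesis phi_c : forall w, phi (c *: w) = 0.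

Definition qlift (q : quotmod) : P := phi (qval q).

Lemma qliftE u : qlift (qpi u) = phi u.
Proof. by rewrite /qlift; have [w ->] := qval_qpi u; rewrite linearD phi_c addr0. Qed.

Lemma qlift_linear : linear qlift.
Proof.
move=> k p q; elim/qpi_ind: p => u; elim/qpi_ind: q => v.
by rewrite -linearP !qliftE linearP.
Qed.

Definition qlin : {linear quotmod -> P} := linear_of qlift_linear.

Lemma qlinE u : qlin (qpi u) = phi u.
Proof. exact: qliftE. Qed.

End Lift.

End QuotientModule.

Section ScalarTensors.
Variables (A : comPzRingType) (F : lmodType A).

Lemma tensor_regular : is_tensor (fun (m : F) (r : A^o) => r *: m).
Proof.
split.
  split=> [r k u v | m k u v] /=; last by rewrite scalerDl scalerA.
  by rewrite scalerDr !scalerA mulrC.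
move=> P g g_bilinear; exists (linear_of (g_bilinear.1 1)); split.
  move=> m r /=; rewrite /linear_of (bilinZl g_bilinear) -(bilinZr g_bilinear).
  by rewrite [r *: _]mulr1.
by move=> h' h'E t; rewrite /= /linear_of -h'E scale1r.
Qed.

Variable b : A.

Lemma qpi_scale_qval (t : A^o) (m : F) : qpi b (qval (qpi b t) *: m) = qpi b (t *: m).
Proof. by have [w ->] := qval_qpi b t; rewrite scalerDl -scalerA qpi_addc. Qed.

Lemma tensor_quotient :
  is_tensor (fun (m : F) (q : quotmod A^o b) => qpi b (qval q *: m)).
Proof.
split.
  split=> [q k u v | m k p q]; first by rewrite -linearP scalerDr !scalerA mulrC.
  elim/qpi_ind: p => u; elim/qpi_ind: q => v.
  by rewrite -[k *: qpi b u + _]linearP !qpi_scale_qval -linearP scalerDl -scalerA.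
(* The universal map sends m + bF to g m (1 + bA). *)
move=> P g g_bilinear; set e := qpi b (1 : A^o).
have g_kills : forall w : F, linear_of (g_bilinear.1 e) (b *: w) = 0.
  move=> w; rewrite /= /linear_of (bilinZl g_bilinear) -(bilinZr g_bilinear).
  have -> : b *: e = 0 by rewrite qpiZ; apply/qpi_eq0; exists 1.
  exact: (bilin0r g_bilinear).
exists (qlin g_kills); split.
  move=> m q; rewrite qlinE /= /linear_of.
  rewrite (bilinZl g_bilinear) -(bilinZr g_bilinear) qpiZ.
  by rewrite [qval q *: _](mulr1 (qval q : A)) qvalK.
move=> h' h'E t.
by rewrite -(qvalK t) qlinE -{1}(scale1r (qval t)) -qpi_scale_qval h'E.
Qed.

End ScalarTensors.

Section FlatModules.
Variables (A : comPzRingType) (a b : A).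
Hypothesis ann_a : forall r : A, a * r = 0 <-> exists s, r = b * s.

Lemma mul_ab : a * b = 0.
Proof. by apply/ann_a; exists 1; rewrite mulr1. Qed.

Lemma scale_a_kills (N : lmodType A) (w : N) : ( *:%R a : {linear N -> N}) (b *: w) = 0.
Proof. by rewrite /= scalerA mul_ab scale0r. Qed.

Definition mul_quot (N : lmodType A) : {linear quotmod N b -> N} := qlin (scale_a_kills (N:=N)).

Lemma mul_quotE (N : lmodType A) (u : N) : mul_quot N (qpi b u) = a *: u.
Proof. exact: qlinE. Qed.

(* Since the annihilator of a is bA, multiplication by a embeds A/bA in A. *)
Lemma mul_quot_injective : injective (mul_quot A^o).
Proof.
move=> p q; elim/qpi_ind: p => u; elim/qpi_ind: q => v; rewrite !mul_quotE => e.
apply/qpi_eqE; apply/ann_a; apply/eqP.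
by rewrite [_ * _](mulrBr a u v) subr_eq0; apply/eqP.
Qed.

(* Tensoring that embedding with a flat F: in F, the elements killed by a
   are exactly the elements of bF. *)
Lemma flat_torsion_divisible (F : lmodType A) :
  flat F -> forall m : F, a *: m = 0 -> exists n, m = b *: n.
Proof.
move=> F_flat m am.
have mul_quotF_inj : injective (mul_quot F).
  apply: (F_flat _ _ _ mul_quot_injective _ _ _ _
    (tensor_quotient F b) (tensor_regular F)).
  by move=> m' q; rewrite mul_quotE scalerA.
have : qpi b m = 0 by apply: mul_quotF_inj; rewrite linear0 mul_quotE.
by case/qpi_eq0 => n ->; exists n.
Qed.

End FlatModules.

Section DimensionShifting.
Variable A : comPzRingType.

Definition torsion_divisible (a b : A) (N : lmodType A) (P : N -> Prop) : Prop :=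
  forall m, P m -> a *: m = 0 -> exists n, P n /\ m = b *: n.

Definition balanced (a b : A) (N : lmodType A) (P : N -> Prop) : Prop :=
  torsion_divisible a b P /\ torsion_divisible b a P.

Lemma balanced_ext (a b : A) (N : lmodType A) (P Q : N -> Prop) :
  (forall y, P y <-> Q y) -> balanced a b P -> balanced a b Q.
Proof.
move=> PQ [Pab Pba]; split=> m /PQ Pm am.
- by have [n [/PQ Qn ->]] := Pab m Pm am; exists n.
- by have [n [/PQ Qn ->]] := Pba m Pm am; exists n.
Qed.

(* For a m = 0 with m = p f, the element a f of ker p is killed
   by b, so a f = a k with k in ker p; then f - k is killed by a, so
   f = k + b g and m = b (p g). *)
Lemma image_torsion_divisible (a b : A) (F N : lmodType A) (p : {linear F -> N}) :
  b * a = 0 ->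
  torsion_divisible a b (fun _ : F => True) ->
  torsion_divisible b a (fun k => p k = 0) ->
  torsion_divisible a b (fun m => exists f, p f = m).
Proof.
move=> ba0 F_div ker_div _ [f <-] apf.
have [k [pk0 afk]] : exists k, p k = 0 /\ a *: f = a *: k.
  apply: ker_div; first by rewrite linearZ_LR apf.
  by rewrite scalerA ba0 scale0r.
have [g [_ fkg]] : exists g, True /\ f - k = b *: g.
  by apply: F_div => //; rewrite scalerBr afk subrr.
exists (p g); split; first by exists g.
by rewrite -linearZ_LR -fkg linearB pk0 subr0.
Qed.

(* The chase applies to both directions, as a b = b a. *)
Lemma image_balanced (a b : A) (F N : lmodType A) (p : {linear F -> N}) :
  a * b = 0 -> balanced a b (fun _ : F => True) ->
  balanced a b (fun k => p k = 0) -> balanced a b (fun m => exists f, p f = m).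
Proof.
move=> ab0 [Fab Fba] [ker_ab ker_ba].
by split; apply: image_torsion_divisible => //; rewrite mulrC.
Qed.

Lemma flat_dim_balanced (a b : A) (M : lmodType A) (n : nat) :
  a * b = 0 ->
  (forall F : lmodType A, flat F -> balanced a b (fun _ : F => True)) ->
  flat_dim_le M n -> balanced a b (fun _ : M => True).
Proof.
move=> ab0 flat_bal [F [d [eps [F_flat [F_zero [eps_surj [eps_ker d_ker]]]]]]].
(* im_d i is the image of d i : F (i+1) -> F i, which is 0 for i >= n and,
   by exactness, is the kernel of d (i-1), resp. of eps for i = 0. *)
pose im_d i (y : F i) := exists z, d i z = y.
have im_d_top i : (n <= i)%N -> balanced a b (im_d i).
  move=> ni; have d0 z : d i z = 0 by rewrite (F_zero _ _ z) ?linear0 ?ltnS.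
  by split=> m [z <-] _; exists 0; rewrite d0 scaler0; split=> //; exists 0; rewrite linear0.
have im_d_down i : balanced a b (im_d i.+1) -> balanced a b (im_d i).
  move=> bal; apply: image_balanced ab0 (flat_bal _ (F_flat _)) _.
  by apply: balanced_ext bal => y; rewrite d_ker.
have im_d0 : balanced a b (im_d 0%N).
  suff: forall k i, (n <= i + k)%N -> balanced a b (im_d i) by apply; rewrite add0n.
  elim=> [|k IH] i; first by rewrite addn0; apply: im_d_top.
  by rewrite -addSnnS => /IH; apply: im_d_down.
apply: balanced_ext (image_balanced ab0 (flat_bal _ (F_flat 0%N)) _) => [m | ].
  by split=> // _; apply: eps_surj.
by apply: balanced_ext im_d0 => y; rewrite eps_ker.
Qed.

End DimensionShifting.

Section Amalgamation.
Variables (R : comPzRingType) (x : R).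

Lemma mul_pair (u1 u2 v1 v2 : R) : ((u1, u2) * (v1, v2) : R * R) = (u1 * v1, u2 * v2).
Proof. by []. Qed.

Lemma amalg_pred_0x : amalg_pred x (0, x).
Proof. by apply/asboolP; exists 0, 1; rewrite mulr1 add0r. Qed.

Lemma amalg_pred_x0 : amalg_pred x (x, 0).
Proof. by apply/asboolP; exists x, (-1); rewrite mulrN1 subrr. Qed.

Lemma amalg_pred_diag (s : R) : amalg_pred x (s, s).
Proof. by apply/asboolP; exists s, 0; rewrite mulr0 addr0. Qed.

Definition ea : R ⋈ x := Amalg amalg_pred_0x.
Definition eb : R ⋈ x := Amalg amalg_pred_x0.

Lemma ea_eb : ea * eb = 0.
Proof. by apply: val_inj; rewrite /= mul_pair mulr0 mul0r. Qed.

Hypothesis x_regular : forall y : R, x * y = 0 -> y = 0.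

(* An element (r, r + x s) killed by (0, x) has r + x s = 0, hence equals
   (x, 0) (-s, -s). *)
Lemma ann_ea (r : R ⋈ x) : ea * r = 0 <-> exists s, r = eb * s.
Proof.
split=> [|[s ->]]; last by rewrite mulrA ea_eb mul0r.
case: r => [[r1 r2] rP] /(congr1 val).
rewrite /= mul_pair => /(congr1 snd) /= /x_regular r20.
have /asboolP [u [s [r1E r2E]]] := rP.
exists (Amalg (amalg_pred_diag (- s))); apply: val_inj => /=.
rewrite mul_pair mul0r r20 mulrN; congr (_, _).
by rewrite r1E; apply/eqP; rewrite -addr_eq0 -r2E r20.
Qed.

(* Symmetrically, (r, r + x s) killed by (x, 0) has r = 0 and equals (0, x) (s, s). *)
Lemma ann_eb (r : R ⋈ x) : eb * r = 0 <-> exists s, r = ea * s.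
Proof.
split=> [|[s ->]]; last by rewrite mulrA [eb * ea]mulrC ea_eb mul0r.
case: r => [[r1 r2] rP] /(congr1 val).
rewrite /= mul_pair => /(congr1 fst) /= /x_regular r10.
have /asboolP [u [s [r1E r2E]]] := rP.
exists (Amalg (amalg_pred_diag s)); apply: val_inj => /=.
by rewrite mul_pair mul0r r10 r2E -r1E r10 add0r.
Qed.

(* By flatness, each of the two annihilator identities makes F balanced. *)
Lemma flat_balanced (F : lmodType (R ⋈ x)) :
  flat F -> balanced ea eb (fun _ : F => True).
Proof.
move=> F_flat; split=> m _ am.
- by have [n ->] := flat_torsion_divisible ann_ea F_flat am; exists n.
- by have [n ->] := flat_torsion_divisible ann_eb F_flat am; exists n.
Qed.

(* If x is not a unit, the class of 1 in (R ⋈ xR) / (0, x) is killed by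
   (0, x) but is not (x, 0) times a class: 1 - (x, 0) u would lie in
   (0, x) (R ⋈ xR), so its first coordinate 1 - x u.1 would vanish. *)
Lemma quotient_ea_unbalanced : ~ (exists y : R, x * y = 1) ->
  ~ torsion_divisible ea eb (fun _ : quotmod (R ⋈ x)^o ea => True).
Proof.
move=> x_nonunit div; have [|q [_]] := div (qpi ea (1 : (R ⋈ x)^o)) I.
  by rewrite qpiZ; apply/qpi_eq0; exists 1.
elim/qpi_ind: q => u; rewrite qpiZ => /qpi_eqE [w].
move=> /(congr1 (fun p : R ⋈ x => (val p).1)) /=; rewrite mul0r => /eqP.
by rewrite subr_eq0 => /eqP ux; apply: x_nonunit; exists (val u).1.
Qed.

End Amalgamation.

Theorem mainTheorem7 (R : comPzRingType) (x : R)
  (x_regular : forall y : R, x * y = 0 -> y = 0)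
  (x_nonunit : ~ (exists y : R, x * y = 1)) :
  wdim_infinite (R ⋈ x).
Proof.
move=> n; exists (quotmod (R ⋈ x)^o (ea x)) => fd_le_n.
apply: (quotient_ea_unbalanced x_nonunit).
exact: (flat_dim_balanced (ea_eb x) (flat_balanced x_regular) fd_le_n).1.
Qed.
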